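(* Let $\Diamond_{ij;kl}$ be a hinge (edge $e_{ij}$ with faces $f_{ijk}$, $f_{ijl}$) with radii $p=r_k,q=r_i,r=r_l,s=r_j>0$ and inversive distances $a=I_{ki},b=I_{il},c=I_{lj},d=I_{jk},e=I_{ij}>1$, such that the edge lengths $l_{\alpha\beta}=\sqrt{r_\alpha^2+r_\beta^2+2I_{\alpha\beta}r_\alpha r_\beta}$ satisfy the triangle inequalities on both faces; develop the hinge into $\mathbb{E}^2$. Then $e_{ij}$ is local weighted Delaunay, i.e. $h_{ij,k}+h_{ij,l}\ge0$, if and only if \[\frac{\sqrt{\Delta_{bce}}}{p}+\frac{\sqrt{\Delta_{ade}}}{r}\le\frac{\sqrt{\Delta_{cdf}}}{q}+\frac{\sqrt{\Delta_{abf}}}{s},\] where $\Delta_{xyz}=x^2+y^2+z^2+2xyz-1$ and $f=\frac{ab+cd+ace+bde+\sqrt{\Delta_{ade}}\sqrt{\Delta_{bce}}}{e^2-1}$.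
   Context: For a Euclidean triangle $f_{ijk}$ with circles of radii $r_i,r_j,r_k$ at the vertices, $O_{ijk}$ denotes the center of the unique circle orthogonal to all three circles (equivalently the point with $|O_{ijk}v_\alpha|^2-r_\alpha^2$ equal for $\alpha=i,j,k$). $h_{ij,k}$ is the distance from $O_{ijk}$ to the line of $e_{ij}$, taken positive if $O_{ijk}$ and $v_k$ lie on the same side of $e_{ij}$ and negative otherwise; similarly $h_{ij,l}$ for $f_{ijl}$. *)

From mathcomp Require Import all_boot all_order all_algebra.
Set Implicit Arguments. Unset Strict Implicit. Unset Printing Implicit Defensive.
Import Order.TTheory GRing.Theory Num.Theory.
Local Open Scope ring_scope.

Definition sqdist (R : rcfType) (u v : R * R) : R :=
  (u.1 - v.1) ^+ 2 + (u.2 - v.2) ^+ 2.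

Definition dist (R : rcfType) (u v : R * R) : R := Num.sqrt (sqdist u v).

Definition cross (R : rcfType) (a b c : R * R) : R :=
  (b.1 - a.1) * (c.2 - a.2) - (b.2 - a.2) * (c.1 - a.1).

Definition edge_len (R : rcfType) (ra rb I : R) : R :=
  Num.sqrt (ra ^+ 2 + rb ^+ 2 + 2 * I * ra * rb).

Definition power (R : rcfType) (O v : R * R) (r : R) : R := sqdist O v - r ^+ 2.

(* O is the centre of the circle orthogonal to the three vertex circles:
   |O v_a|^2 - r_a^2 = |O v_b|^2 - r_b^2 = |O v_c|^2 - r_c^2. *)
Definition is_orth_center (R : rcfType) (O va vb vc : R * R) (ra rb rc : R) : Prop :=
  power O va ra = power O vb rb /\ power O vb rb = power O vc rc.

(* h_{ab,c}: distance from O to the line of edge (va,vb), positive if O and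
   vc lie on the same side of that line, negative otherwise. *)
Definition signed_height (R : rcfType) (va vb vc O : R * R) : R :=
  cross va vb O / dist va vb * Num.sg (cross va vb vc).

Definition Delta (R : rcfType) (x y z : R) : R :=
  x ^+ 2 + y ^+ 2 + z ^+ 2 + 2 * x * y * z - 1.

(** Lagrange's identity and the orthogonality conditions give
    [cross v_i v_j v_k * cross v_i v_j O_ijk = q s N_k] and
    [N_k^2 + (e^2 - 1) cross v_i v_j v_k ^2 = l_ij^2 p^2 Delta_ade], where
    [N_k = height_num p q s a d e] is polynomial in the data; hence
    [h_ij,k = q s N_k / (l_ij |cross v_i v_j v_k|)], and likewise on [f_ijl].
    The second relation parametrises [N_k] by an angle in [(0, pi)], and
    [h_ij,k + h_ij,l >= 0] becomes the condition that the two angles add up to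
    at most [pi], i.e. [0 <= N_k r sqrt Delta_bce + N_l p sqrt Delta_ade].
    Finally [sqrt Delta_cdf] and [sqrt Delta_abf] are linear in
    [sqrt Delta_ade] and [sqrt Delta_bce], which turns the inequality of the
    statement into the same condition. *)

From mathcomp Require Import all_boot all_order all_algebra.
From mathcomp Require Import ring lra.
Import Order.TTheory GRing.Theory Num.Theory.
Local Open Scope ring_scope.

Section Hinge.
Local Set Implicit Arguments. Local Unset Strict Implicit.
Variable R : rcfType.
Implicit Types (u v va vb vc vd O : R * R) (ra rb rc I a b c d e p q r s x y z : R).

Lemma sqdistC u v : sqdist u v = sqdist v u.
Proof. by rewrite /sqdist; ring. Qed.

Lemma distC u v : dist u v = dist v u.
Proof. by rewrite /dist sqdistC. Qed.

Lemma edge_lenC ra rb I : edge_len ra rb I = edge_len rb ra I.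
Proof. by congr Num.sqrt; ring. Qed.

Lemma sqdist_edge_len u v ra rb I : 0 <= ra -> 0 <= rb -> -1 <= I ->
  dist u v = edge_len ra rb I -> sqdist u v = ra ^+ 2 + rb ^+ 2 + 2 * I * ra * rb.
Proof.
move=> ra0 rb0 I1 /(congr1 (fun t => t ^+ 2)).
rewrite /dist /edge_len !sqr_sqrtr //; last by rewrite addr_ge0 ?sqr_ge0.
have : 0 <= ra * rb * (I + 1) by rewrite !mulr_ge0 // -lerBlDr sub0r.
have := sqr_ge0 (ra - rb); nra.
Qed.

Lemma cross_mul_crossE va vb vc vd :
  4 * (cross va vb vc * cross va vb vd) =
    2 * sqdist va vb * (sqdist va vc + sqdist va vd - sqdist vc vd)
    - (sqdist va vb + sqdist va vc - sqdist vb vc)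
      * (sqdist va vb + sqdist va vd - sqdist vb vd).
Proof.
by case: va vb vc vd => [? ?] [? ?] [? ?] [? ?]; rewrite /cross /sqdist /=; ring.
Qed.

Lemma cross_sqrE va vb vc :
  4 * cross va vb vc ^+ 2 =
    4 * sqdist va vb * sqdist va vc - (sqdist va vb + sqdist va vc - sqdist vb vc) ^+ 2.
Proof. by case: va vb vc => [? ?] [? ?] [? ?]; rewrite /cross /sqdist /=; ring. Qed.

Lemma cross_mul_cross_orth_center O va vb vc ra rb rc :
  is_orth_center O va vb vc ra rb rc ->
  4 * (cross va vb vc * cross va vb O) =
    2 * sqdist va vb * (sqdist va vc + ra ^+ 2 - rc ^+ 2)
    - (sqdist va vb + sqdist va vc - sqdist vb vc)
      * (sqdist va vb + ra ^+ 2 - rb ^+ 2).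
Proof.
move=> [ab bc]; rewrite cross_mul_crossE.
have sqdist_power v r : sqdist v O = power O v r + r ^+ 2.
  by rewrite /power sqdistC; ring.
rewrite (sqdist_power va ra) (sqdist_power vb rb) (sqdist_power vc rc) -bc -ab.
ring.
Qed.

Lemma signed_heightE va vb vc O :
  signed_height va vb vc O =
    cross va vb vc * cross va vb O / `|cross va vb vc| / dist va vb.
Proof.
rewrite /signed_height; set C := cross va vb vc.
have [-> | C0] := eqVneq C 0; first by rewrite sgr0 !(mulr0, mul0r).
rewrite {2}[C]numEsg (mulrAC _ `|C|) mulfK ?normr_eq0 //.
by rewrite mulrAC [cross _ _ O * _]mulrC.
Qed.

Lemma DeltaC x y z : Delta x y z = Delta y x z.
Proof. by rewrite /Delta; ring. Qed.

Lemma Delta_gt0 x y z : 1 < x -> 1 < y -> 1 < z -> 0 < Delta x y z.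
Proof.
rewrite /Delta => x1 y1 z1.
have xy1 : 1 < x * y by nra.
have : 1 < x * y * z by nra.
nra.
Qed.

Lemma sqrt_Delta_gt0 x y z : 1 < x -> 1 < y -> 1 < z -> 0 < Num.sqrt (Delta x y z).
Proof. by move=> x1 y1 z1; rewrite sqrtr_gt0 Delta_gt0. Qed.

Lemma sqr_sqrt_Delta x y z : 1 < x -> 1 < y -> 1 < z ->
  Num.sqrt (Delta x y z) ^+ 2 = Delta x y z.
Proof. by move=> x1 y1 z1; rewrite sqr_sqrtr // ltW // Delta_gt0. Qed.

Definition hinge_f a b c d e : R :=
  (a * b + c * d + a * c * e + b * d * e
   + Num.sqrt (Delta a d e) * Num.sqrt (Delta b c e)) / (e ^+ 2 - 1).

Lemma hinge_fC a b c d e : hinge_f d c b a e = hinge_f a b c d e.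
Proof.
rewrite /hinge_f (DeltaC d) (DeltaC c).
by congr (_ / _); ring.
Qed.

Lemma sqrt_Delta_cd_hinge_f a b c d e :
  1 < a -> 1 < b -> 1 < c -> 1 < d -> 1 < e ->
  Num.sqrt (Delta c d (hinge_f a b c d e)) =
    ((a + e * d) * Num.sqrt (Delta b c e) + (b + e * c) * Num.sqrt (Delta a d e))
    / (e ^+ 2 - 1).
Proof.
move=> a1 b1 c1 d1 e1; rewrite /hinge_f.
set X := Num.sqrt (Delta a d e); set Y := Num.sqrt (Delta b c e).
have X2 : X ^+ 2 = Delta a d e by rewrite sqr_sqrt_Delta.
have Y2 : Y ^+ 2 = Delta b c e by rewrite sqr_sqrt_Delta.
have X0 : 0 <= X := sqrtr_ge0 _.
have Y0 : 0 <= Y := sqrtr_ge0 _.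
have E0 : 0 < e ^+ 2 - 1 by nra.
have -> : Delta c d ((a * b + c * d + a * c * e + b * d * e + X * Y) / (e ^+ 2 - 1))
  = (((a + e * d) * Y + (b + e * c) * X) / (e ^+ 2 - 1)) ^+ 2
    + ((Y ^+ 2 - (b + c * e) ^+ 2) * (X ^+ 2 - Delta a d e)
       + (e ^+ 2 - 1) * (1 - d ^+ 2) * (Y ^+ 2 - Delta b c e)) / (e ^+ 2 - 1) ^+ 2.
  by rewrite /Delta; field; rewrite gt_eqF.
rewrite X2 Y2 !subrr !mulr0 addr0 mul0r addr0 sqrtr_sqr ger0_norm //.
by rewrite divr_ge0 ?(ltW E0) // addr_ge0 // mulr_ge0 //; nra.
Qed.

Lemma sqrt_Delta_ab_hinge_f a b c d e :
  1 < a -> 1 < b -> 1 < c -> 1 < d -> 1 < e ->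
  Num.sqrt (Delta a b (hinge_f a b c d e)) =
    ((d + e * a) * Num.sqrt (Delta b c e) + (c + e * b) * Num.sqrt (Delta a d e))
    / (e ^+ 2 - 1).
Proof.
move=> a1 b1 c1 d1 e1.
by rewrite DeltaC -hinge_fC sqrt_Delta_cd_hinge_f // (DeltaC d) (DeltaC c).
Qed.

Definition height_num p q s a d e : R :=
  - (e ^+ 2 - 1) * q * s + p * s * (a + d * e) + p * q * (d + a * e).

Lemma hinge_face_cross p q s a d e (vi vj vk O : R * R) :
  sqdist vi vj = q ^+ 2 + s ^+ 2 + 2 * e * q * s ->
  sqdist vj vk = s ^+ 2 + p ^+ 2 + 2 * d * s * p ->
  sqdist vk vi = p ^+ 2 + q ^+ 2 + 2 * a * p * q ->
  is_orth_center O vi vj vk q s p ->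
  cross vi vj vk * cross vi vj O = q * s * height_num p q s a d e /\
  height_num p q s a d e ^+ 2 + (e ^+ 2 - 1) * cross vi vj vk ^+ 2 =
    sqdist vi vj * (p ^+ 2 * Delta a d e).
Proof.
rewrite (sqdistC vk) => ij jk ik orth.
have four0 : (4 : R) != 0 by rewrite pnatr_eq0.
split; apply: (mulfI four0).
  by rewrite (cross_mul_cross_orth_center orth) ij jk ik /height_num; ring.
by rewrite mulrDr (mulrCA 4 (e ^+ 2 - 1)) cross_sqrE ij jk ik /height_num /Delta; ring.
Qed.

(** Write [x = sqrt U * P * cos t] and [sqrt E * A = sqrt U * P * sin t] with
    [t] in [(0, pi)], and similarly [y], [B], [Q] with an angle [t'].  Both
    sides then say [t + t' <= pi]: the left one is [cot t + cot t' >= 0], the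
    right one [cos t + cos t' >= 0]. *)
Lemma cot_add_ge0E (U E x y A B P Q : R) :
  0 < U -> 0 < E -> 0 < A -> 0 < B -> 0 < P -> 0 < Q ->
  x ^+ 2 + E * A ^+ 2 = U * P ^+ 2 -> y ^+ 2 + E * B ^+ 2 = U * Q ^+ 2 ->
  (0 <= x / A + y / B) = (0 <= x * Q + y * P).
Proof.
move=> U0 E0 A0 B0 P0 Q0 hx hy.
have -> : x / A + y / B = (x * B + y * A) / (A * B) by field; rewrite !gt_eqF.
rewrite pmulr_lge0 ?invr_gt0 ?mulr_gt0 //.
wlog xy : x y A B P Q A0 B0 P0 Q0 hx hy / x <= y.
  move=> wlog_xy; have [|/ltW yx] := lerP x y; first exact: wlog_xy.
  by rewrite addrC [in RHS]addrC; apply: wlog_xy.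
have [x0 | x0] := lerP 0 x.
  have y0 : 0 <= y := le_trans x0 xy.
  by rewrite !addr_ge0 // mulr_ge0 // ltW.
have [y0 | y0] := ltrP y 0.
  by rewrite !lt_geF // ltr_nDl // pmulr_llt0.
have sqr_cmp (u v : R) : 0 <= u -> 0 <= v -> (0 <= v - u) = (0 <= v ^+ 2 - u ^+ 2).
  by move=> u0 v0; rewrite !subr_ge0 ler_sqr.
have key : E * ((y * A) ^+ 2 - (- x * B) ^+ 2) = U * ((y * P) ^+ 2 - (- x * Q) ^+ 2).
  have EA : E * A ^+ 2 = U * P ^+ 2 - x ^+ 2 by rewrite -hx; ring.
  have EB : E * B ^+ 2 = U * Q ^+ 2 - y ^+ 2 by rewrite -hy; ring.
  have -> : E * ((y * A) ^+ 2 - (- x * B) ^+ 2)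
    = y ^+ 2 * (E * A ^+ 2) - x ^+ 2 * (E * B ^+ 2) by ring.
  by rewrite EA EB; ring.
have -> : x * B + y * A = y * A - (- x * B) by rewrite mulNr opprK addrC.
have -> : x * Q + y * P = y * P - (- x * Q) by rewrite mulNr opprK addrC.
have nx : 0 <= - x by rewrite oppr_ge0 ltW.
rewrite (sqr_cmp (- x * B)) ?(sqr_cmp (- x * Q))
  ?mulr_ge0 ?(ltW A0) ?(ltW B0) ?(ltW P0) ?(ltW Q0) //.
by rewrite -(pmulr_rge0 _ E0) key pmulr_rge0.
Qed.

Lemma hinge_ineqE p q r s a b c d e X Y :
  0 < p -> 0 < q -> 0 < r -> 0 < s -> 1 < e ->
  (Y / p + X / r <= ((a + e * d) * Y + (b + e * c) * X) / (e ^+ 2 - 1) / q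
                    + ((d + e * a) * Y + (c + e * b) * X) / (e ^+ 2 - 1) / s)
  = (0 <= height_num p q s a d e * (r * Y) + height_num r q s b c e * (p * X)).
Proof.
move=> p0 q0 r0 s0 e1.
have E0 : 0 < e ^+ 2 - 1 by nra.
rewrite -subr_ge0.
have -> : ((a + e * d) * Y + (b + e * c) * X) / (e ^+ 2 - 1) / q
    + ((d + e * a) * Y + (c + e * b) * X) / (e ^+ 2 - 1) / s - (Y / p + X / r)
  = (height_num p q s a d e * (r * Y) + height_num r q s b c e * (p * X))
    / ((e ^+ 2 - 1) * p * q * r * s).
  by rewrite /height_num; field; rewrite !gt_eqF.
by rewrite pmulr_lge0 // invr_gt0 !mulr_gt0.
Qed.

End Hinge.

Theorem lemma4p5 (R : rcfType) (p q r s a b c d e : R)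
    (vi vj vk vl Oijk Oijl : R * R) :
  0 < p -> 0 < q -> 0 < r -> 0 < s ->
  1 < a -> 1 < b -> 1 < c -> 1 < d -> 1 < e ->
  let lij := edge_len q s e in
  let ljk := edge_len s p d in
  let lki := edge_len p q a in
  let lil := edge_len q r b in
  let llj := edge_len r s c in
  (* triangle inequalities on f_ijk *)
  lij < ljk + lki -> ljk < lki + lij -> lki < lij + ljk ->
  (* triangle inequalities on f_ijl *)
  lij < llj + lil -> llj < lil + lij -> lil < lij + llj ->
  (* development of the hinge into E^2 *)
  dist vi vj = lij -> dist vj vk = ljk -> dist vk vi = lki ->
  dist vi vl = lil -> dist vl vj = llj ->
  cross vi vj vk * cross vi vj vl < 0 ->
  is_orth_center Oijk vi vj vk q s p ->
  is_orth_center Oijl vi vj vl q s r ->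
  let f := (a * b + c * d + a * c * e + b * d * e
            + Num.sqrt (Delta a d e) * Num.sqrt (Delta b c e)) / (e ^+ 2 - 1) in
  (0 <= signed_height vi vj vk Oijk + signed_height vi vj vl Oijl) <->
  (Num.sqrt (Delta b c e) / p + Num.sqrt (Delta a d e) / r
     <= Num.sqrt (Delta c d f) / q + Num.sqrt (Delta a b f) / s).
Proof.
move=> p0 q0 r0 s0 a1 b1 c1 d1 e1 lij ljk lki lil llj _ _ _ _ _ _
  ij jk ki il lj Cneg orth_k orth_l f.
change f with (hinge_f a b c d e).
rewrite sqrt_Delta_cd_hinge_f // sqrt_Delta_ab_hinge_f // hinge_ineqE //.
have sqd (u v : R * R) (x y I : R) : 0 < x -> 0 < y -> 1 < I ->
    dist u v = edge_len x y I -> sqdist u v = x ^+ 2 + y ^+ 2 + 2 * I * x * y.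
  by move=> *; apply: sqdist_edge_len => //; lra.
rewrite distC /lil edge_lenC in il; rewrite distC /llj edge_lenC in lj.
have ij2 := sqd _ _ _ _ _ q0 s0 e1 ij.
have [cross_k Nk] := hinge_face_cross ij2 (sqd _ _ _ _ _ s0 p0 d1 jk)
  (sqd _ _ _ _ _ p0 q0 a1 ki) orth_k.
have [cross_l Nl] := hinge_face_cross ij2 (sqd _ _ _ _ _ s0 r0 c1 lj)
  (sqd _ _ _ _ _ r0 q0 b1 il) orth_l.
have /ltr0_neq0 := Cneg; rewrite mulf_eq0 negb_or => /andP[Ck0 Cl0].
have U0 : 0 < sqdist vi vj.
  have : 0 < e * q * s by rewrite !mulr_gt0 // (lt_trans ltr01 e1).
  by rewrite ij2; nra.
rewrite !signed_heightE cross_k cross_l -mulrDl pmulr_lge0 ?invr_gt0 ?sqrtr_gt0 //.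
rewrite -!mulrA -mulrDr pmulr_rge0 // -mulrDr pmulr_rge0 //.
rewrite (@cot_add_ge0E _ (sqdist vi vj) (e ^+ 2 - 1) _ _ _ _
  (p * Num.sqrt (Delta a d e)) (r * Num.sqrt (Delta b c e)))
  ?normr_gt0 ?mulr_gt0 ?sqrt_Delta_gt0 //; first by nra.
- by rewrite real_normK ?num_real // exprMn sqr_sqrt_Delta.
- by rewrite real_normK ?num_real // exprMn sqr_sqrt_Delta.
Qed.
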